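(* Let $m,n\ge0$, $0\le k\le\min(m,n)$, and let $i,j$ be integers with $0\le i\le m$, $0\le j\le n$, $k\le i+j\le m+n-k$. Then $$c_{m,n,k}(i,j)=\sum_{l=0}^{k}(-1)^l\binom{i+j-k}{i-l}\binom{m-i}{k-l}\binom{n-j}{l}.$$
   Context: Binomial coefficients $\binom{a}{b}$ equal $\frac{a!}{b!(a-b)!}$ when $0\le b\le a$ and $0$ otherwise. Let $e,f,h$ be the standard basis of $\mathfrak{sl}(2,\mathbb{C})$. $V(n)$ is the irreducible representation of highest weight $n$ with fixed highest weight vector $\phi_n$; $\{f^i\phi_n\}_{0\le i\le n}$ is a basis, $f^{n+1}\phi_n=0$. $\mathfrak{sl}(2)$ acts on $V(m)\otimes V(n)$ by $X(v\otimes w)=Xv\otimes w+v\otimes Xw$. For $0\le k\le\min(m,n)$, $\phi_{m,n,k}=\sum_{l=0}^{k}(-1)^l\binom{m-l}{k-l}\binom{n-k+l}{l} f^l\phi_m\otimes f^{k-l}\phi_n$ (a highest weight vector of weight $m+n-2k$). The coordinates $c_{m,n,k}(i,j)$ are defined by $f^{p-k}\phi_{m,n,k}=\sum_{i+j=p,\,0\le i\le m,\,0\le j\le n} c_{m,n,k}(i,j)\, f^i\phi_m\otimes f^j\phi_n$ for $k\le p\le m+n-k$. *)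

From HB Require Import structures.
From mathcomp Require Import all_boot all_order all_algebra all_field.
Set Implicit Arguments. Unset Strict Implicit. Unset Printing Implicit Defensive.
Import Order.TTheory GRing.Theory Num.Theory.
Local Open Scope ring_scope.

(* V(m) is modelled as column vectors 'cV[algC]_(m.+1); the highest weight
   vector phi_m is the first standard basis vector, and f acts by the
   lowering (shift) matrix: f e_i = e_(i+1) (and f e_m = 0).
   Hence f^i phi_m = e_i is the basis {f^i phi_m}. *)
Definition fmx (m : nat) : 'M[algC]_(m.+1) :=
  \matrix_(r < m.+1, s < m.+1) ((r : nat) == s.+1)%:R.

Definition hw (m : nat) : 'cV[algC]_(m.+1) := delta_mx 0 0.

Definition fpow (m i : nat) : 'cV[algC]_(m.+1) := (fmx m) ^+ i *m hw m.

(* V(m) (x) V(n) is modelled as (m+1) x (n+1) matrices; v (x) w := v w^T. *)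
Definition tens (m n : nat) (v : 'cV[algC]_(m.+1)) (w : 'cV[algC]_(n.+1))
  : 'M[algC]_(m.+1, n.+1) := v *m w^T.

Definition ftens (m n : nat) (T : 'M[algC]_(m.+1, n.+1)) : 'M[algC]_(m.+1, n.+1) :=
  fmx m *m T + T *m (fmx n)^T.

Lemma ftens_tens m n v w :
  ftens (tens v w) = tens (fmx m *m v) w + tens v (fmx n *m w).
Proof. by rewrite /ftens /tens mulmxA trmx_mul mulmxA. Qed.

Definition phimnk (m n k : nat) : 'M[algC]_(m.+1, n.+1) :=
  \sum_(l < k.+1) ((-1) ^+ l * ('C(m - l, k - l))%:R * ('C(n - k + l, l))%:R)
     *: tens (fpow m l) (fpow n (k - l)).

(* coordinate c_{m,n,k}(i,j): coefficient of f^i phi_m (x) f^j phi_n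
   in f^(p-k) phi_{m,n,k}, p = i + j.  Since f^i phi_m (x) f^j phi_n is
   the matrix unit delta_mx i j in this model, the coordinate is the
   (i,j) entry. *)
Definition coord_c (m n k : nat) (i : 'I_m.+1) (j : 'I_n.+1) : algC :=
  (iter (i + j - k) (@ftens m n) (phimnk m n k)) i j.

(* integer binomial with the convention binom(a,b) = 0 for b < 0:
   binom(a, i - l) where i - l is an integer difference *)
Definition binom_sub (a i l : nat) : nat := if (l <= i)%N then 'C(a, i - l) else 0%N.

From HB Require Import structures.
From mathcomp Require Import all_boot all_order all_algebra all_field.
From mathcomp Require Import ring zify.
Import Order.TTheory GRing.Theory Num.Theory.
Local Open Scope ring_scope.

(* In the basis f^a phi_m (x) f^b phi_n the operator f acts on coordinates by
   the Pascal rule c'(a, b) = c(a - 1, b) + c(a, b - 1), and phi_{m,n,k} is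
   supported on the antidiagonal a + b = k, where its coefficients agree with
   the claimed formula.  The formula also satisfies the Pascal rule off that
   antidiagonal (the alternating sum absorbs the two Pascal splittings of its
   binomials), so induction on the number of applications of f concludes. *)

(* Pascal splittings of C(mu+1, k-l) and C(nu+1, l) leave two sums that
   cancel against each other, because y is x shifted by one index. *)
Lemma sum_pascal_shift (R : comPzRingType) (k mu nu : nat) (x y : nat -> R) :
  (forall l, y l.+1 = x l) ->
    \sum_(l < k.+1) (-1) ^+ l * x l * ('C(mu.+1, k - l))%:R * ('C(nu, l))%:R
  + \sum_(l < k.+1) (-1) ^+ l * y l * ('C(mu, k - l))%:R * ('C(nu.+1, l))%:R
  = \sum_(l < k.+1) (-1) ^+ l * (x l + y l) * ('C(mu, k - l))%:R * ('C(nu, l))%:R.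
Proof.
move=> yS.
have binSl l : 'C(mu.+1, k - l) =
    ('C(mu, k - l) + (if (l < k)%N then 'C(mu, k - l.+1) else 0))%N.
  case: ltnP => lk; first by rewrite -(subnSK lk) binS.
  have kl0 : (k - l = 0)%N by lia.
  by rewrite kl0 !bin0.
have binSr l : 'C(nu.+1, l) = ('C(nu, l) + (if l is l'.+1 then 'C(nu, l') else 0))%N.
  by case: l => [|l]; rewrite ?bin0 ?binS.
under eq_bigr => l _ do rewrite binSl natrD mulrDr mulrDl.
under [X in _ + X = _]eq_bigr => l _ do rewrite binSr natrD mulrDr.
rewrite !big_split /=.
set S1 := \sum_(l < k.+1) _ * _ * (if _ then _ else _)%:R * _.
set S2 := \sum_(l < k.+1) _ * _ * _ * (match _ with 0 => _ | _ => _ end)%:R.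
have S12 : S1 + S2 = 0.
  rewrite /S1 /S2 big_ord_recr /= ltnn mulr0 mul0r addr0.
  rewrite [X in _ + X]big_ord_recl /= mulr0 add0r -big_split /=.
  by apply: big1 => l _; rewrite /bump /= add1n (ltn_ord l) exprS yS; ring.
rewrite addrACA S12 addr0 -big_split /=.
by apply: eq_bigr => l _; ring.
Qed.

Lemma binom_subSS q a l :
  binom_sub q.+1 a.+1 l = (binom_sub q a l + binom_sub q a.+1 l)%N.
Proof.
rewrite /binom_sub; case: (ltngtP l a.+1) => la.
- by rewrite (la : (l <= a)%N) subSn // binS addnC.
- by rewrite leqNgt (ltnW la).
- by rewrite la ltnn subnn !bin0.
Qed.

Lemma binom_sub_r0 q l : binom_sub q 0 l = (l == 0)%N.
Proof. by rewrite /binom_sub; case: l => [|l] //=; rewrite bin0. Qed.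

Lemma binom_sub_l0 a l : binom_sub 0 a l = (l == a).
Proof.
rewrite /binom_sub bin0n; case: ltngtP => la //; last by rewrite la subnn.
by apply/eqP; lia.
Qed.

Lemma fmx_mulE m p (A : 'M[algC]_(m.+1, p)) (r : 'I_m.+1) s :
  (fmx m *m A) r s = if (r : nat) is r'.+1 then A (inord r') s else 0.
Proof.
rewrite mxE; case: r => [[|r] rm] /=.
  by apply: big1 => s' _; rewrite mxE mul0r.
rewrite (bigD1 (inord r)) //= mxE inordK ?eqxx ?mul1r; last by lia.
rewrite big1 ?addr0 // => s' s'r; rewrite mxE /=.
case: eqP => [rs'|]; last by rewrite mul0r.
by case/eqP: s'r; apply: val_inj; rewrite /= inordK; lia.
Qed.

Lemma fpowE m l (r : 'I_m.+1) : fpow m l r 0 = ((r : nat) == l)%:R.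
Proof.
elim: l r => [|l IHl] r; first by rewrite /fpow mul1mx /hw mxE eqxx andbT.
rewrite /fpow exprS -mulmxA fmx_mulE; case: r => [[|r] rm] //=.
by have := IHl (inord r); rewrite /fpow => ->; rewrite inordK //; lia.
Qed.

Definition coef {m n : nat} (T : 'M[algC]_(m.+1, n.+1)) (a b : nat) : algC :=
  if (a <= m)%N && (b <= n)%N then T (inord a) (inord b) else 0.

Lemma coef_ord m n (T : 'M[algC]_(m.+1, n.+1)) (a : 'I_m.+1) (b : 'I_n.+1) :
  coef T a b = T a b.
Proof. by rewrite /coef !leq_ord /= !inord_val. Qed.

Lemma coef_ftens m n (T : 'M[algC]_(m.+1, n.+1)) a b :
  (a <= m)%N -> (b <= n)%N ->
  coef (ftens T) a b = (if a is a'.+1 then coef T a' b else 0)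
                     + (if b is b'.+1 then coef T a b' else 0).
Proof.
move=> am bn; rewrite /coef am bn /= /ftens mxE fmx_mulE.
rewrite -[T *m _]trmxK trmx_mul trmxK [(_^T) _ _]mxE fmx_mulE !inordK; try lia.
case: a am => [|a] am; case: b bn => [|b] bn /=; rewrite ?mxE ?ifT //; lia.
Qed.

Lemma tensE m n v w (a : 'I_m.+1) (b : 'I_n.+1) : tens v w a b = v a 0 * w b 0.
Proof. by rewrite /tens mxE big_ord1 mxE. Qed.

Definition coord_formula m n k a b : algC :=
  \sum_(l < k.+1) (-1) ^+ l * (binom_sub (a + b - k) a l)%:R
                   * ('C(m - a, k - l))%:R * ('C(n - b, l))%:R.

Lemma coord_formula_a0 m n k b : coord_formula m n k 0 b = ('C(m, k))%:R.
Proof.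
rewrite /coord_formula big_ord_recl big1 ?addr0.
  by rewrite /= binom_sub_r0 !subn0 bin0 !mulr1 mul1r.
by move=> l _; rewrite binom_sub_r0 /= !mulr0 !mul0r.
Qed.

Lemma coord_formula_b0 m n k a : (k <= a <= m)%N ->
  coord_formula m n k a 0 = (-1) ^+ k * ('C(n, k))%:R.
Proof.
move=> /andP[ka am]; rewrite /coord_formula addn0 (big_only1 ord_max) //=.
  by rewrite /binom_sub ka binn subnn bin0 subn0 !mulr1.
move=> l; rewrite -val_eqE /= => lk _; have lk1 := ltn_ord l.
rewrite /binom_sub; case: leqP => la; last by rewrite !mulr0 !mul0r.
by rewrite bin_small ?mulr0 ?mul0r //; lia.
Qed.

Lemma coord_formula_pascal m n k a b :
  (a.+1 <= m)%N -> (b.+1 <= n)%N -> (k < a.+1 + b.+1)%N ->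
  coord_formula m n k a.+1 b.+1 =
    coord_formula m n k a b.+1 + coord_formula m n k a.+1 b.
Proof.
move=> am bn kab; rewrite /coord_formula.
have -> : (a.+1 + b.+1 - k = (a + b.+1 - k).+1)%N by lia.
have -> : (a.+1 + b - k = a + b.+1 - k)%N by lia.
have -> : (m - a = (m - a.+1).+1)%N by lia.
have -> : (n - b = (n - b.+1).+1)%N by lia.
under eq_bigr => l _ do rewrite binom_subSS natrD.
rewrite -(sum_pascal_shift _ _ _ _
  (fun l => (binom_sub (a + b.+1 - k) a l)%:R)
  (fun l => (binom_sub (a + b.+1 - k) a.+1 l)%:R)) //.
Qed.

Lemma coord_formula_pascal_edges m n k a b :
  (a <= m)%N -> (b <= n)%N -> (k < a + b)%N ->
  coord_formula m n k a b =
    (if a is a'.+1 then coord_formula m n k a' b else 0)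
  + (if b is b'.+1 then coord_formula m n k a b' else 0).
Proof.
move=> am bn kab.
case: a am kab => [|a] am kab; case: b bn kab => [|b] bn kab //.
- by rewrite add0r !coord_formula_a0.
- by rewrite addr0 !coord_formula_b0 //; lia.
- exact: coord_formula_pascal.
Qed.

Lemma coef_phimnk m n k a b : (k <= minn m n)%N -> (a <= m)%N -> (b <= n)%N ->
  coef (phimnk m n k) a b = if (a + b == k)%N then coord_formula m n k a b else 0.
Proof.
move=> kmn am bn; rewrite /coef am bn /= /phimnk summxE.
under eq_bigr => l _ do rewrite mxE tensE !fpowE !inordK ?ltnS //.
have [abk | abk] := eqVneq (a + b)%N k; last first.
  apply: big1 => l _; have := ltn_ord l.
  by case: eqP => al; case: eqP => bkl; rewrite ?mul0r ?mulr0 //; lia.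
have ak : (a < k.+1)%N by lia.
rewrite /coord_formula abk subnn (big_only1 (Ordinal ak)) //=; last first.
  by move=> l; rewrite -val_eqE /= => /negbTE la _; rewrite eq_sym la !mul0r mulr0.
rewrite (big_only1 (Ordinal ak)) //=; last first.
  by move=> l; rewrite -val_eqE /= => /negbTE la _; rewrite binom_sub_l0 la !mulr0 !mul0r.
have -> : (b == k - a)%N by apply/eqP; lia.
have -> : (n - k + a = n - b)%N by lia.
by rewrite binom_sub_l0 !eqxx !mulr1.
Qed.

Lemma coef_iter_ftens m n k t a b : (k <= minn m n)%N ->
  (a <= m)%N -> (b <= n)%N ->
  coef (iter t (@ftens m n) (phimnk m n k)) a b =
    if (a + b == k + t)%N then coord_formula m n k a b else 0.
Proof.
move=> kmn; elim: t a b => [|t IHt] a b am bn.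
  by rewrite addn0 coef_phimnk.
rewrite /= coef_ftens //.
have [abkt | abkt] := eqVneq (a + b)%N (k + t.+1).
  rewrite coord_formula_pascal_edges //; last by lia.
  by case: a am abkt => [|a] am abkt; case: b bn abkt => [|b] bn abkt;
    rewrite ?IHt ?ifT //; lia.
case: a am abkt => [|a] am abkt; case: b bn abkt => [|b] bn abkt;
  rewrite ?IHt ?add0r ?addr0 ?ifF ?addr0 //; lia.
Qed.

Theorem proposition9p2 (m n k : nat) (i : 'I_m.+1) (j : 'I_n.+1) :
  (k <= minn m n)%N -> (k <= i + j)%N -> (i + j <= m + n - k)%N ->
  coord_c k i j =
    \sum_(l < k.+1) (-1) ^+ l * (binom_sub (i + j - k) i l)%:R
                      * ('C(m - i, k - l))%:R * ('C(n - j, l))%:R.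
Proof.
move=> kmn kij _.
by rewrite /coord_c -coef_ord coef_iter_ftens ?leq_ord // subnKC ?eqxx.
Qed.
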